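(* For every point set $X$ that is a permutation, $\mathrm{GB}(X)\le 2\,\mathrm{opt}(X)$.
   Context: Points have integer coordinates; $X$ is a permutation if every horizontal and every vertical line contains at most one point of $X$. Two points are collinear if they share an $x$- or a $y$-coordinate; for non-collinear $p,q$, $\square_{p,q}$ is the smallest closed axis-parallel rectangle containing both; the pair is satisfied in $S$ if some $r\in S\setminus\{p,q\}$ lies in $\square_{p,q}$, and $S$ is satisfied if all its non-collinear pairs are. $\mathrm{opt}(X)$ is the minimum $|Y|$ with $X\cup Y$ satisfied. Guillotine bound: a guillotine partitioning tree $T$ is built as follows. The root $r$ has region $S(r)=B$, a bounding box of $X$. While some leaf $v$ has $|S(v)\cap X|>1$, choose such $v$ and a vertical or horizontal line $L(v)$ inside $S(v)$ containing no point of $X$ that splits $S(v)$ into two rectangles $S',S''$ with $X\cap S'\ne\emptyset\ne X\cap S''$; give $v$ two children with regions $S'$ and $S''$. The cost of an internal vertex $v$ is the number of pairs of points of $X\cap S(v)$ that are consecutive in increasing $y$-order (if $L(v)$ is vertical) or in increasing $x$-order (if $L(v)$ is horizontal) and lie on opposite sides of $L(v)$; leaves cost $0$. $\mathrm{GB}_T(X)$ is the total cost and $\mathrm{GB}(X)=\max_T\mathrm{GB}_T(X)$. *)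

From HB Require Import structures.
From mathcomp Require Import all_boot all_order all_algebra.
From mathcomp Require Import finmap.
From Stdlib Require Import ClassicalEpsilon.

Set Implicit Arguments.
Unset Strict Implicit.
Unset Printing Implicit Defensive.

Import Order.TTheory GRing.Theory Num.Theory.
Local Open Scope fset_scope.
Local Open Scope ring_scope.

Definition point := (int * int)%type.

Definition collinear (p q : point) : bool := (p.1 == q.1) || (p.2 == q.2).

Definition in_box (p q r : point) : bool :=
  [&& Num.min p.1 q.1 <= r.1, r.1 <= Num.max p.1 q.1,
      Num.min p.2 q.2 <= r.2 & r.2 <= Num.max p.2 q.2].

Definition is_permutation (X : {fset point}) : Prop :=
  forall p q, p \in X -> q \in X -> (p.1 = q.1 \/ p.2 = q.2) -> p = q.

Definition pair_satisfied (S : {fset point}) (p q : point) : Prop :=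
  exists2 r, r \in S & [&& r != p, r != q & in_box p q r].

Definition satisfied (S : {fset point}) : Prop :=
  forall p q, p \in S -> q \in S -> ~~ collinear p q -> pair_satisfied S p q.

(** Classical minimum / maximum of a set of naturals (0 if none exists). *)
Definition natmin (P : nat -> Prop) : nat :=
  match excluded_middle_informative
          (exists m : nat, P m /\ forall k, P k -> (m <= k)%N) with
  | left H => proj1_sig (constructive_indefinite_description _ H)
  | right _ => 0%N
  end.

Definition natmax (P : nat -> Prop) : nat :=
  match excluded_middle_informative
          (exists m : nat, P m /\ forall k, P k -> (k <= m)%N) with
  | left H => proj1_sig (constructive_indefinite_description _ H)
  | right _ => 0%N
  end.

Definition opt (X : {fset point}) : nat :=
  natmin (fun k => exists Y : {fset point}, satisfied (X `|` Y) /\ #|` Y| = k).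

(** Closed axis-parallel rectangles [xlo,xhi] x [ylo,yhi] with rational
    corners: ((xlo, xhi), (ylo, yhi)). *)
Definition rect := ((rat * rat) * (rat * rat))%type.

Definition in_rect (S : rect) (p : point) : bool :=
  [&& S.1.1 <= p.1%:~R, p.1%:~R <= S.1.2,
      S.2.1 <= p.2%:~R & p.2%:~R <= S.2.2].

Definition pts (X : {fset point}) (S : rect) : {fset point} :=
  [fset p in X | in_rect S p].

(** A guillotine partitioning tree: [Node vert c l r] cuts its region by the
    vertical line x = c (if [vert]) or the horizontal line y = c (otherwise);
    [l] is the child on the side of smaller coordinates. *)
Inductive gtree :=
  | Leaf : gtree
  | Node : bool -> rat -> gtree -> gtree -> gtree.

Definition cut_coord (vert : bool) (p : point) : rat :=
  if vert then p.1%:~R else p.2%:~R.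
Definition ord_coord (vert : bool) (p : point) : int :=
  if vert then p.2 else p.1.

Definition split_left (vert : bool) (c : rat) (S : rect) : rect :=
  if vert then ((S.1.1, c), S.2) else (S.1, (S.2.1, c)).
Definition split_right (vert : bool) (c : rat) (S : rect) : rect :=
  if vert then ((c, S.1.2), S.2) else (S.1, (c, S.2.2)).

Definition line_inside (vert : bool) (c : rat) (S : rect) : bool :=
  if vert then (S.1.1 < c < S.1.2) else (S.2.1 < c < S.2.2).

Fixpoint valid (X : {fset point}) (S : rect) (T : gtree) : Prop :=
  match T with
  | Leaf => (#|` pts X S| <= 1)%N
  | Node vert c l r =>
      line_inside vert c S /\
      (forall p, p \in pts X S -> cut_coord vert p != c) /\
      pts X (split_left vert c S) != fset0 /\
      pts X (split_right vert c S) != fset0 /\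
      valid X (split_left vert c S) l /\
      valid X (split_right vert c S) r
  end.

Definition node_cost (X : {fset point}) (S : rect) (vert : bool) (c : rat) : nat :=
  let XS := pts X S in
  (\sum_(p <- XS) \sum_(q <- XS)
     nat_of_bool [&& ord_coord vert p < ord_coord vert q,
         ~~ has (fun r => ord_coord vert p < ord_coord vert r < ord_coord vert q) XS
       & (cut_coord vert p < c) != (cut_coord vert q < c)]%R)%N.

Fixpoint tree_cost (X : {fset point}) (S : rect) (T : gtree) : nat :=
  match T with
  | Leaf => 0%N
  | Node vert c l r =>
      (node_cost X S vert c + tree_cost X (split_left vert c S) l
       + tree_cost X (split_right vert c S) r)%N
  end.

Definition bounding_box (X : {fset point}) (B : rect) : Prop :=
  forall p, p \in X -> in_rect B p.

Definition is_guillotine_tree (X : {fset point}) (B : rect) (T : gtree) : Prop :=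
  bounding_box X B /\ valid X B T.

Definition GB (X : {fset point}) : nat :=
  natmax (fun g => exists B T, is_guillotine_tree X B T /\ tree_cost X B T = g).

(* Fix a node cutting its region S by a line L, and a satisfied set Z containing the points of
   X in S.  Call a pair (p, q) counted by the node a crossing, and fix the side s of L on which p
   lies.  As X is a permutation, these crossings occupy pairwise disjoint bands of the coordinate
   along L, and the box of each one contains two points u, w of Z on a common line parallel to L.
   On either side of L, collapsing every band onto the coordinate of its endpoint on that side is
   monotone, hence maps the points of Z on that side to a satisfied set; this set still contains
   the points of X in the corresponding child, which are fixed, while w is identified with u.
   So the two children have satisfied supersets of total size at most |Z| minus the number of
   crossings from side s.  Averaging over s and inducting on the tree gives
   cost(T) + 2|X ∩ S| <= 2|Z|, and Z = X ∪ Y yields GB_T(X) <= 2|Y|. *)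

From mathcomp Require Import all_boot all_order all_algebra finmap.
From mathcomp Require Import zify lra.
From Stdlib Require Import ClassicalEpsilon.

Set Implicit Arguments.
Unset Strict Implicit.
Unset Printing Implicit Defensive.

Import Order.TTheory GRing.Theory Num.Theory.
Local Open Scope fset_scope.
Local Open Scope ring_scope.

Definition between (R : numDomainType) (a b x : R) : bool :=
  ((a <= x) && (x <= b)) || ((b <= x) && (x <= a)).

Lemma between_ratr (a b x : int) :
  between a b x -> between (a%:~R : rat) b%:~R x%:~R.
Proof. by rewrite /between !ler_int. Qed.

Lemma between_homo (f : int -> int) a b x : {homo f : u v / u <= v} ->
  between a b x -> between (f a) (f b) (f x).
Proof.
by move=> f_homo /orP[] /andP[le1 le2]; rewrite /between !(f_homo _ _ le1, f_homo _ _ le2) ?orbT.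
Qed.

Lemma in_boxE p q r : in_box p q r = between p.1 q.1 r.1 && between p.2 q.2 r.2.
Proof. by rewrite /in_box /between; apply/idP/idP; lia. Qed.

Definition cut_int (vert : bool) (p : point) : int := if vert then p.1 else p.2.

Lemma cut_coordE vert p : cut_coord vert p = (cut_int vert p)%:~R.
Proof. by case: vert. Qed.

Lemma in_box_split vert p q r : in_box p q r =
  between (cut_int vert p) (cut_int vert q) (cut_int vert r) &&
  between (ord_coord vert p) (ord_coord vert q) (ord_coord vert r).
Proof. by rewrite in_boxE; case: vert; rewrite // andbC. Qed.

Lemma collinear_split vert p q : collinear p q =
  (cut_int vert p == cut_int vert q) || (ord_coord vert p == ord_coord vert q).
Proof. by rewrite /collinear; case: vert; rewrite // orbC. Qed.

Lemma point_eq_split vert (p q : point) :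
  cut_int vert p = cut_int vert q -> ord_coord vert p = ord_coord vert q -> p = q.
Proof. by case: p q => [p1 p2] [q1 q2]; case: vert => /= -> ->. Qed.

Lemma in_box_cut vert p q r : in_box p q r ->
  between (cut_coord vert p) (cut_coord vert q) (cut_coord vert r).
Proof. by rewrite (in_box_split vert) !cut_coordE => /andP[/between_ratr]. Qed.

Lemma in_box_l p q : in_box p q p.
Proof. by rewrite in_boxE /between; lia. Qed.

Lemma in_box_r p q : in_box p q q.
Proof. by rewrite in_boxE /between; lia. Qed.

Lemma in_box_trans_l p q r z : in_box p q r -> in_box r q z -> in_box p q z.
Proof. by rewrite !in_boxE /between; lia. Qed.

Lemma in_box_trans_r p q r z : in_box p q r -> in_box p r z -> in_box p q z.
Proof. by rewrite !in_boxE /between; lia. Qed.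

Definition l1dist (p q : point) : nat := (`|p.1 - q.1| + `|p.2 - q.2|)%N.

Lemma l1dist_ind (P : point -> point -> Prop) :
  (forall p q, (forall p' q', (l1dist p' q' < l1dist p q)%N -> P p' q') -> P p q) ->
  forall p q, P p q.
Proof.
move=> IH p q; move: {2}(l1dist p q) (leqnn (l1dist p q)) => n.
elim: n p q => [|n IHn] p q le_pq; apply: IH => p' q' lt_pq.
  by have := leq_trans lt_pq le_pq.
by apply: IHn; rewrite -ltnS (leq_trans lt_pq).
Qed.

Lemma point_neq (p q : point) : p != q -> (p.1 != q.1) || (p.2 != q.2).
Proof. by case: p q => [p1 p2] [q1 q2]; rewrite xpair_eqE negb_and. Qed.

Lemma l1dist_box_l p q r : in_box p q r -> r != p -> (l1dist r q < l1dist p q)%N.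
Proof. by rewrite in_boxE /between /l1dist => ? /point_neq; lia. Qed.

Lemma l1dist_box_r p q r : in_box p q r -> r != q -> (l1dist p r < l1dist p q)%N.
Proof. by rewrite in_boxE /between /l1dist => ? /point_neq; lia. Qed.

Lemma rect_convex (S : rect) p q r :
  in_rect S p -> in_rect S q -> in_box p q r -> in_rect S r.
Proof.
move=> /and4P[] + + + + /and4P[] + + + + pqr.
have := in_box_cut true pqr; have := in_box_cut false pqr.
rewrite /= /in_rect /between; lra.
Qed.

Lemma cut_lt_convex vert (c : rat) p q r : cut_coord vert p < c -> cut_coord vert q < c ->
  in_box p q r -> cut_coord vert r < c.
Proof. by move=> + + /(in_box_cut vert); rewrite /between; lra. Qed.

Lemma cut_gt_convex vert (c : rat) p q r : c < cut_coord vert p -> c < cut_coord vert q ->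
  in_box p q r -> c < cut_coord vert r.
Proof. by move=> + + /(in_box_cut vert); rewrite /between; lra. Qed.

Lemma endpoint_of_closed_not_open (a b t : int) :
  a <= t <= b -> ~~ (a < t < b) -> t = a \/ t = b.
Proof. by lia. Qed.

Lemma satisfied_aligned_pair vert (W : {fset point}) p q :
  satisfied W -> p \in W -> q \in W -> ~~ collinear p q ->
  exists u w, [/\ u \in W, w \in W, u != w, cut_int vert u = cut_int vert w &
                  in_box p q u && in_box p q w].
Proof.
move=> satW; move: p q; apply: l1dist_ind => p q IH pW qW pq_ncol.
have [r rW /and3P[rp rq pqr]] := satW p q pW qW pq_ncol.
move: (pq_ncol); rewrite (collinear_split vert) negb_or => /andP[_ pq_ord].
have [rp_cut|rp_cut] := eqVneq (cut_int vert r) (cut_int vert p).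
  by exists r, p; rewrite rW pW rp rp_cut pqr in_box_l.
have [rq_cut|rq_cut] := eqVneq (cut_int vert r) (cut_int vert q).
  by exists r, q; rewrite rW qW rq rq_cut pqr in_box_r.
have [rq_ord|rq_ord] := eqVneq (ord_coord vert r) (ord_coord vert q).
- have pr_ncol : ~~ collinear p r.
    by rewrite (collinear_split vert) negb_or eq_sym rp_cut rq_ord pq_ord.
  have [u [w [uW wW uw uw_cut /andP[pru prw]]]] :=
    IH p r (l1dist_box_r pqr rq) pW rW pr_ncol.
  by exists u, w; rewrite uW wW uw uw_cut !(in_box_trans_r pqr).
- have rq_ncol : ~~ collinear r q.
    by rewrite (collinear_split vert) negb_or rq_cut rq_ord.
  have [u [w [uW wW uw uw_cut /andP[rqu rqw]]]] :=
    IH r q (l1dist_box_l pqr rp) rW qW rq_ncol.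
  by exists u, w; rewrite uW wW uw uw_cut !(in_box_trans_l pqr).
Qed.

Lemma satisfied_image (f : point -> point) (A : {fset point}) :
  (forall p q, collinear p q -> collinear (f p) (f q)) ->
  (forall p q r, in_box p q r -> in_box (f p) (f q) (f r)) ->
  satisfied A -> satisfied [fset f z | z in A].
Proof.
move=> f_col f_box satA _ _ /imfsetP[p pA ->] /imfsetP[q qA ->].
move: p q pA qA; apply: l1dist_ind => p q IH pA qA fpq_ncol.
have pq_ncol : ~~ collinear p q by apply: contra fpq_ncol; apply: f_col.
have [r rA /and3P[rp rq pqr]] := satA p q pA qA pq_ncol.
have [frp|frp] := eqVneq (f r) (f p).
  by rewrite -frp; apply: IH (l1dist_box_l pqr rp) rA qA _; rewrite frp.
have [frq|frq] := eqVneq (f r) (f q).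
  by rewrite -frq; apply: IH (l1dist_box_r pqr rq) pA rA _; rewrite frq.
by exists (f r); [apply/imfsetP; exists r | rewrite frp frq f_box].
Qed.

Lemma satisfied_restrict (Z : {fset point}) (P : pred point) :
  (forall p q r, P p -> P q -> in_box p q r -> P r) ->
  satisfied Z -> satisfied [fset z in Z | P z].
Proof.
move=> P_convex satZ p q; rewrite !inE => /andP[pZ Pp] /andP[qZ Pq] pq_ncol.
have [r rZ /and3P[rp rq pqr]] := satZ p q pZ qZ pq_ncol.
by exists r; rewrite ?inE ?rZ ?(P_convex p q r) ?rp ?rq ?pqr.
Qed.

Lemma in_pts (Z : {fset point}) S x : (x \in pts Z S) = (x \in Z) && in_rect S x.
Proof. by rewrite inE. Qed.

Lemma pts_subset (Z : {fset point}) S : pts Z S `<=` Z.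
Proof. by apply/fsubsetP => z; rewrite in_pts => /andP[]. Qed.

Definition split_side (side : bool) vert c (S : rect) : rect :=
  if side then split_left vert c S else split_right vert c S.

Definition on_side (side : bool) vert (c : rat) (p : point) : bool :=
  if side then cut_coord vert p < c else c < cut_coord vert p.

Lemma split_side_subrect side vert c (S : rect) x :
  line_inside vert c S -> in_rect (split_side side vert c S) x -> in_rect S x.
Proof.
case: S => [[a b] [a' b']]; rewrite /line_inside /in_rect /split_side.
by case: vert; case: side => /= /andP[? ?] /and4P[? ? ? ?]; repeat (apply/andP; split); lra.
Qed.

Lemma in_split_side side vert c (S : rect) x :
  line_inside vert c S -> cut_coord vert x != c ->
  in_rect (split_side side vert c S) x = in_rect S x && on_side side vert c x.
Proof.
case: S => [[a b] [a' b']]; rewrite /line_inside /in_rect /split_side /on_side.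
case: vert; case: side => /= /andP[? ?]; rewrite neq_lt => /orP[] ?;
  by apply/idP/idP => H; repeat (apply/andP; split); move: H; lra.
Qed.

Lemma on_side_lt side vert c x : on_side side vert c x -> (cut_coord vert x < c) = side.
Proof. by case: side => //= /lt_gtF. Qed.

Lemma satisfied_pts (Z : {fset point}) (S : rect) : satisfied Z -> satisfied (pts Z S).
Proof. by apply: satisfied_restrict => p q r; apply: rect_convex. Qed.

Lemma pts_subset_pts (X Z : {fset point}) (S : rect) : pts X S `<=` Z -> pts X S `<=` pts Z S.
Proof.
move=> /fsubsetP XS_Z; apply/fsubsetP => x xXS.
by rewrite in_pts XS_Z //; move: xXS; rewrite in_pts => /andP[].
Qed.

Lemma card_pts_split (X : {fset point}) (S : rect) vert c :
  line_inside vert c S -> (forall p, p \in pts X S -> cut_coord vert p != c) ->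
  (#|` pts X S| <= #|` pts X (split_left vert c S)| + #|` pts X (split_right vert c S)|)%N.
Proof.
move=> inside off_line; apply: leq_trans (leq_card_fsetU _ _); apply: fsubset_leq_card.
apply/fsubsetP => x xXS; move: (xXS); rewrite in_fsetU !in_pts => /andP[-> xS] /=.
have:= in_split_side true inside (off_line x xXS).
have:= in_split_side false inside (off_line x xXS).
rewrite /split_side /on_side => -> ->; rewrite xS /=.
by case: ltgtP (off_line x xXS) => //; rewrite ?orbT.
Qed.

Section Crossings.
Variables (X : {fset point}) (S : rect) (vert : bool) (c : rat).

Local Notation XS := (pts X S).
Local Notation oc := (ord_coord vert).
Local Notation cut := (cut_coord vert).

Definition consecutive_crossing (p q : point) : bool :=
  [&& oc p < oc q, ~~ has (fun r => oc p < oc r < oc q) XS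
    & (cut p < c) != (cut q < c)].

Definition crossings (s : bool) : seq (point * point) :=
  [seq pq <- [seq (p, q) | p <- XS, q <- XS]
     | consecutive_crossing pq.1 pq.2 && ((cut pq.1 < c) == s)].

Lemma node_cost_crossings :
  node_cost X S vert c = (size (crossings true) + size (crossings false))%N.
Proof.
have -> : node_cost X S vert c = (\sum_(pq <- [seq (p, q) | p <- XS, q <- XS])
    consecutive_crossing pq.1 pq.2)%N by rewrite big_allpairs.
rewrite !size_filter; elim: [seq _ | _ <- _, _ <- _] => [|[p q] pqs IH].
  by rewrite big_nil.
rewrite big_cons IH /=.
by case: consecutive_crossing; case: (cut p < c) => /=; lia.
Qed.

Hypothesis HX : is_permutation X.
Variable s : bool.

Local Notation cr := (crossings s).

Lemma ord_coord_inj : {in XS &, injective oc}.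
Proof.
move=> p q; rewrite !in_pts => /andP[pX _] /andP[qX _] pq_oc; apply: HX => //.
by move: pq_oc; case: vert; [right | left].
Qed.

Lemma crossings_spec (pq : point * point) : pq \in cr ->
  [/\ pq.1 \in XS, pq.2 \in XS, consecutive_crossing pq.1 pq.2 & (cut pq.1 < c) = s].
Proof.
case: pq => p q; rewrite mem_filter => /andP[/andP[? /eqP ?]].
by case/allpairsP=> [[p' q'] /= [? ? [e1 e2]]]; subst p' q'.
Qed.

Lemma crossing_gap (pq : point * point) (r : point) :
  pq \in cr -> r \in XS -> ~~ (oc pq.1 < oc r < oc pq.2).
Proof. by case/crossings_spec => _ _ /and3P[_ /hasPn gap _] _; apply: gap. Qed.

(* Fixing the side of the first point is what makes the bands disjoint: the consecutive
   crossings (p, q) and (q, r) start on opposite sides. *)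
Lemma crossings_ordered (pq pq' : point * point) : pq \in cr -> pq' \in cr -> oc pq.1 <= oc pq'.1 ->
  pq = pq' \/ oc pq.2 < oc pq'.1.
Proof.
move=> cr_pq cr_pq' le1.
have [p1 p2 /and3P[lt12 _ sides] side1] := crossings_spec cr_pq.
have [p1' p2' /and3P[lt12' _ _] side1'] := crossings_spec cr_pq'.
have gap1 := crossing_gap cr_pq p1'; have gap2 := crossing_gap cr_pq p2'.
have gap2' := crossing_gap cr_pq' p2.
have [eq1|ne1] := eqVneq (oc pq.1) (oc pq'.1).
  have eq2 : oc pq.2 = oc pq'.2 by lia.
  by left; apply: injective_projections; apply: ord_coord_inj.
right; have [//|gt|eq] := ltgtP (oc pq.2) (oc pq'.1); first by lia.
by move: sides; rewrite (ord_coord_inj p2 p1' eq) side1 side1' eqxx.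
Qed.

Definition in_band (pq : point * point) (t : int) : bool := oc pq.1 <= t <= oc pq.2.

Lemma crossings_disjoint (pq pq' : point * point) t : pq \in cr -> pq' \in cr ->
  in_band pq t -> in_band pq' t -> pq = pq'.
Proof.
wlog le1 : pq pq' / oc pq.1 <= oc pq'.1.
  move=> wlog_le; have [le1|/ltW le1] := lerP (oc pq.1) (oc pq'.1); first exact: wlog_le.
  by move=> *; symmetry; apply: wlog_le.
move=> cr_pq cr_pq'; rewrite /in_band.
have [//|lt12] := crossings_ordered cr_pq cr_pq' le1.
by move=> band band'; exfalso; lia.
Qed.

(* [pq.1] lies on side [s] (with [true] meaning [cut < c]), so this is the end of the band
   lying on [side]. *)
Definition band_end (side : bool) (pq : point * point) : point :=
  if s == side then pq.1 else pq.2.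

Definition collapse (side : bool) (t : int) : int :=
  if [seq pq <- cr | in_band pq t] is pq :: _ then oc (band_end side pq) else t.

Lemma collapse_in_band side (pq : point * point) t : pq \in cr -> in_band pq t ->
  collapse side t = oc (band_end side pq).
Proof.
move=> cr_pq band; rewrite /collapse.
have : pq \in [seq pq <- cr | in_band pq t] by rewrite mem_filter band cr_pq.
case E: [seq _ <- _ | _] => [//|pq' pqs] _.
have : pq' \in [seq pq <- cr | in_band pq t] by rewrite E mem_head.
by rewrite mem_filter => /andP[band' cr_pq']; rewrite (crossings_disjoint cr_pq' cr_pq band' band).
Qed.

Lemma collapse_out side t : ~~ has (in_band^~ t) cr -> collapse side t = t.
Proof. by rewrite has_filter negbK /collapse => /eqP->. Qed.

Lemma band_end_in_band side (pq : point * point) : pq \in cr -> in_band pq (oc (band_end side pq)).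
Proof.
case/crossings_spec=> _ _ /andP[lt12 _] _; rewrite /in_band /band_end.
by case: ifP; rewrite lexx ltW.
Qed.

Lemma collapse_homo side : {homo collapse side : t1 t2 / t1 <= t2}.
Proof.
move=> t1 t2 le12.
have [/hasP[pq cr_pq band]|out1] := boolP (has (in_band^~ t1) cr);
  have [/hasP[pq' cr_pq' band']|out2] := boolP (has (in_band^~ t2) cr).
- rewrite (collapse_in_band side cr_pq band) (collapse_in_band side cr_pq' band').
  move: (band_end_in_band side cr_pq) (band_end_in_band side cr_pq') band band'.
  rewrite /in_band.
  have [le1|/ltW le1] := lerP (oc pq.1) (oc pq'.1).
    by have [->|lt21] := crossings_ordered cr_pq cr_pq' le1; lia.
  by have [->|lt12] := crossings_ordered cr_pq' cr_pq le1; lia.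
- rewrite (collapse_in_band side cr_pq band) (collapse_out side out2).
  move: (band_end_in_band side cr_pq) band (hasPn out2 _ cr_pq); rewrite /in_band; lia.
- rewrite (collapse_in_band side cr_pq' band') (collapse_out side out1).
  move: (band_end_in_band side cr_pq') band' (hasPn out1 _ cr_pq'); rewrite /in_band; lia.
- by rewrite (collapse_out side out1) (collapse_out side out2).
Qed.

Definition squash (side : bool) (z : point) : point :=
  if vert then (z.1, collapse side z.2) else (collapse side z.1, z.2).

Lemma cut_int_squash side z : cut_int vert (squash side z) = cut_int vert z.
Proof. by rewrite /squash; case: vert. Qed.

Lemma ord_coord_squash side z : oc (squash side z) = collapse side (oc z).
Proof. by rewrite /squash; case: vert. Qed.

Lemma squash_collinear side p q : collinear p q -> collinear (squash side p) (squash side q).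
Proof.
rewrite !(collinear_split vert) !cut_int_squash !ord_coord_squash.
by case/orP=> [-> // | /eqP->]; rewrite eqxx orbT.
Qed.

Lemma squash_in_box side p q r : in_box p q r ->
  in_box (squash side p) (squash side q) (squash side r).
Proof.
rewrite !(in_box_split vert) !cut_int_squash !ord_coord_squash => /andP[-> /=].
exact/between_homo/collapse_homo.
Qed.

Lemma squash_fix side (x : point) : x \in XS -> on_side side vert c x -> squash side x = x.
Proof.
move=> xXS /on_side_lt x_side; apply: (point_eq_split (vert := vert)); first exact: cut_int_squash.
rewrite ord_coord_squash.
have [/hasP[pq cr_pq band]|out] := boolP (has (in_band^~ (oc x)) cr); last exact: collapse_out.
rewrite (collapse_in_band side cr_pq band) /band_end.
have [p1 p2 /and3P[_ _ sides] side1] := crossings_spec cr_pq.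
have [x1|x2] : oc x = oc pq.1 \/ oc x = oc pq.2.
  exact: endpoint_of_closed_not_open band (crossing_gap cr_pq xXS).
- by rewrite -side1 -(ord_coord_inj xXS p1 x1) x_side eqxx.
- by move: sides; rewrite -side1 -(ord_coord_inj xXS p2 x2) x_side => /negPf->.
Qed.

Variable Z : {fset point}.
Hypothesis satZ : satisfied Z.
Hypothesis XS_subset_Z : XS `<=` Z.

Local Notation W := (pts Z S).

Definition side_part (side : bool) : {fset point} := [fset z in W | on_side side vert c z].

Lemma satisfied_side_part side : satisfied (side_part side).
Proof.
rewrite /side_part; apply: (satisfied_restrict _ (satisfied_pts satZ)) => p q r.
by case: side; [apply: cut_lt_convex | apply: cut_gt_convex].
Qed.

Let XS_W : {subset XS <= W} := fsubsetP (pts_subset_pts XS_subset_Z).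

Definition aligned_pair (pq uw : point * point) : Prop :=
  [/\ uw.1 \in W, uw.2 \in W, uw.1 != uw.2, cut_int vert uw.1 = cut_int vert uw.2
    & in_box pq.1 pq.2 uw.1 && in_box pq.1 pq.2 uw.2].

Definition aligned (pq : point * point) : point * point :=
  epsilon (inhabits pq) (aligned_pair pq).

Lemma aligned_spec (pq : point * point) : pq \in cr -> aligned_pair pq (aligned pq).
Proof.
move=> cr_pq; apply: (epsilon_spec (inhabits pq) (aligned_pair pq)).
have [p1 p2 /and3P[lt12 _ sides] _] := crossings_spec cr_pq.
have pq_ncol : ~~ collinear pq.1 pq.2.
  rewrite (collinear_split vert) negb_or (lt_eqF lt12) andbT.
  by apply: contra sides; rewrite !cut_coordE => /eqP->; rewrite eqxx.
have [u [w [uW wW uw uw_cut /andP[pqu pqw]]]] :=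
  satisfied_aligned_pair vert (satisfied_pts satZ) (XS_W p1) (XS_W p2) pq_ncol.
by exists (u, w); split; rewrite //= pqu pqw.
Qed.

Lemma aligned_in_band (pq : point * point) : pq \in cr ->
  in_band pq (oc (aligned pq).1) /\ in_band pq (oc (aligned pq).2).
Proof.
move=> cr_pq; have [_ _ _ _ /andP[pqu pqw]] := aligned_spec cr_pq.
have [_ _ /andP[lt12 _] _] := crossings_spec cr_pq.
move: pqu pqw; rewrite !(in_box_split vert) /in_band /between => /andP[_ +] /andP[_ +].
by move: lt12; lia.
Qed.

Definition merged : {fset point} := [fset (aligned pq).2 | pq in cr].

Lemma merged_in_band (pq : point * point) z : pq \in cr -> z \in merged ->
  in_band pq (oc z) -> z = (aligned pq).2.
Proof.
move=> cr_pq /imfsetP[pq' cr_pq' ->] band.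
by rewrite (crossings_disjoint cr_pq cr_pq' band (aligned_in_band cr_pq').2).
Qed.

Lemma aligned_notin_merged (pq : point * point) : pq \in cr -> (aligned pq).1 \notin merged.
Proof.
move=> cr_pq; apply/negP => /(merged_in_band cr_pq) /(_ (aligned_in_band cr_pq).1) eq12.
by have [_ _ /negP[]] := aligned_spec cr_pq; rewrite {1}eq12.
Qed.

Lemma merged_subset : merged `<=` W.
Proof. by apply/fsubsetP => _ /imfsetP[pq cr_pq ->]; case: (aligned_spec cr_pq). Qed.

Lemma size_crossings_le : (size cr <= #|` merged|)%N.
Proof.
rewrite card_in_imfset /=; last first.
  move=> pq pq' cr_pq cr_pq' eq2.
  apply: (crossings_disjoint cr_pq cr_pq' (aligned_in_band cr_pq).2).
  by rewrite eq2; apply: (aligned_in_band cr_pq').2.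
rewrite undup_id // filter_uniq // allpairs_uniq ?fset_uniq //.
by move=> [p q] [p' q'] _ _ [-> ->].
Qed.

Lemma in_side_part side z : (z \in side_part side) = (z \in W) && on_side side vert c z.
Proof. by rewrite inE. Qed.

Lemma squash_merged side z : z \in side_part side ->
  exists2 z', z' \in side_part side `\` merged & squash side z' = squash side z.
Proof.
move=> z_side; have [/imfsetP[pq cr_pq z_eq]|z_nm] := boolP (z \in merged); last first.
  by exists z; rewrite // inE z_nm.
subst z.
have [uW _ _ uw_cut _] := aligned_spec cr_pq.
have [u_band w_band] := aligned_in_band cr_pq.
exists (aligned pq).1.
  rewrite inE aligned_notin_merged //= in_side_part uW /on_side cut_coordE uw_cut.
  by move: z_side; rewrite in_side_part /on_side cut_coordE => /andP[].
apply: (point_eq_split (vert := vert)); first by rewrite !cut_int_squash.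
rewrite !ord_coord_squash.
by rewrite (collapse_in_band side cr_pq u_band) (collapse_in_band side cr_pq w_band).
Qed.

Definition squashed (side : bool) : {fset point} := [fset squash side z | z in side_part side].

Lemma card_squashed side : (#|` squashed side| <= #|` side_part side `\` merged|)%N.
Proof.
apply: (@leq_trans #|` [fset squash side z | z in side_part side `\` merged]|).
  apply: fsubset_leq_card; apply/fsubsetP => _ /imfsetP[z z_side ->].
  by have [z' z'_side <-] := squash_merged z_side; apply/imfsetP; exists z'.
exact: leq_imfset_card.
Qed.

Lemma card_side_parts :
  (#|` side_part true `\` merged| + #|` side_part false `\` merged| + #|` merged| <= #|` W|)%N.
Proof.
have cardU (A B : {fset point}) : [disjoint A & B] -> #|` A `|` B| = (#|` A| + #|` B|)%N.
  by move=> AB; apply/eqP; rewrite (leq_card_fsetU A B).2.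
rewrite -!cardU.
- apply: fsubset_leq_card; apply/fsubsetP => z.
  rewrite !in_fsetU !in_fsetD !in_side_part.
  by case/orP=> [/orP[]|/(fsubsetP merged_subset)] // /andP[_ /andP[]].
- by apply/fdisjointP => z; rewrite in_fsetU !in_fsetD => /orP[] /andP[].
- apply/fdisjointP => z; rewrite !in_fsetD !in_side_part /on_side => /andP[_ /andP[_ lt_zc]].
  by rewrite (lt_gtF lt_zc) !andbF.
Qed.

Lemma satisfied_squashed side : satisfied (squashed side).
Proof.
by apply: satisfied_image;
  [apply: squash_collinear | apply: squash_in_box | apply: satisfied_side_part].
Qed.

Hypothesis inside : line_inside vert c S.
Hypothesis off_line : forall p, p \in XS -> cut p != c.

Lemma squashed_contains side : pts X (split_side side vert c S) `<=` squashed side.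
Proof.
apply/fsubsetP => x; rewrite in_pts => /andP[xX x_half].
have xXS : x \in XS by rewrite in_pts xX (split_side_subrect inside x_half).
move: x_half; rewrite (in_split_side _ inside (off_line xXS)) => /andP[_ x_side].
rewrite -(squash_fix xXS x_side); apply/imfsetP; exists x => //.
by rewrite in_side_part XS_W.
Qed.

Lemma split_satisfied_superset : exists ZL ZR, [/\ satisfied ZL, satisfied ZR,
  pts X (split_left vert c S) `<=` ZL, pts X (split_right vert c S) `<=` ZR &
  (#|` ZL| + #|` ZR| + size cr <= #|` Z|)%N].
Proof.
exists (squashed true), (squashed false); split;
  [exact: satisfied_squashed | exact: satisfied_squashed |
   exact: squashed_contains true | exact: squashed_contains false |].
have := card_squashed true; have := card_squashed false.
have := size_crossings_le; have := card_side_parts.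
have := fsubset_leq_card (pts_subset Z S).
lia.
Qed.

End Crossings.

Lemma tree_cost_bound (X : {fset point}) (T : gtree) : is_permutation X ->
  forall (S : rect) (Z : {fset point}), valid X S T -> satisfied Z -> pts X S `<=` Z ->
  (tree_cost X S T + 2 * #|` pts X S| <= 2 * #|` Z|)%N.
Proof.
move=> HX; elim: T => [|vert c l IHl r IHr] S Z /=.
  by move=> _ _ /fsubset_leq_card; rewrite add0n leq_mul2l.
case=> [inside [off_line [_ [_ [valid_l valid_r]]]]] satZ XS_Z.
have side_bound s : (tree_cost X (split_left vert c S) l + tree_cost X (split_right vert c S) r
    + 2 * (#|` pts X (split_left vert c S)| + #|` pts X (split_right vert c S)|)
    + 2 * size (crossings X S vert c s) <= 2 * #|` Z|)%N.
  have [ZL [ZR [satL satR subL subR card_s]]] :=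
    split_satisfied_superset HX s satZ XS_Z inside off_line.
  by have := IHl _ _ valid_l satL subL; have := IHr _ _ valid_r satR subR; lia.
have := side_bound true; have := side_bound false; have := card_pts_split inside off_line.
(* The cardinals coming from the statement are elaborated at a different (convertible) type
   than those of the hypotheses, which [lia] would treat as distinct atoms. *)
by rewrite node_cost_crossings; move: #|` pts X S| #|` Z|; lia.
Qed.

Lemma guillotine_cost_bound (X Y : {fset point}) (B : rect) (T : gtree) :
  is_permutation X -> is_guillotine_tree X B T -> satisfied (X `|` Y) ->
  (tree_cost X B T <= 2 * #|` Y|)%N.
Proof.
move=> HX [bbox valid_T] satXY.
have XB : pts X B = X by apply/fsetP => x; rewrite in_pts andb_idr // => /bbox.
have := tree_cost_bound HX valid_T satXY; rewrite XB => /(_ (fsubsetUl X Y)).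
have := (leq_card_fsetU X Y).1; lia.
Qed.

Definition grid (X : {fset point}) : {fset point} := [fset (a.1, b.2) | a in X, b in X].

Lemma grid_subset (X : {fset point}) : X `<=` grid X.
Proof. by apply/fsubsetP => -[x y] xyX; apply/imfset2P; exists (x, y) => //; exists (x, y). Qed.

Lemma satisfied_grid (X : {fset point}) : satisfied (grid X).
Proof.
move=> _ _ /imfset2P[a aX [b bX ->]] /imfset2P[a' aX' [b' bX' ->]] /=.
rewrite /collinear negb_or /= => /andP[ne1 ne2].
exists (a.1, b'.2); first by apply/imfset2P; exists a => //; exists b'.
apply/and3P; split; first by rewrite xpair_eqE eqxx eq_sym.
  by rewrite xpair_eqE eqxx andbT.
by rewrite in_boxE /between /=; lia.
Qed.

Lemma natmax_le (P : nat -> Prop) b : (forall n, P n -> n <= b)%N -> (natmax P <= b)%N.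
Proof.
rewrite /natmax; case: excluded_middle_informative => // exP P_le.
by case: constructive_indefinite_description => /= m [/P_le].
Qed.

Lemma ex_minn_prop (P : nat -> Prop) n : P n -> exists m, P m /\ forall k, P k -> (m <= k)%N.
Proof.
elim/ltn_ind: n => n IH Pn.
have [[k [lt_kn Pk]]|no_smaller] := classic (exists k, (k < n)%N /\ P k).
  exact: IH lt_kn Pk.
exists n; split => // k Pk; rewrite leqNgt; apply/negP => lt_kn.
by apply: no_smaller; exists k.
Qed.

Lemma natmin_spec (P : nat -> Prop) n : P n -> P (natmin P).
Proof.
move=> Pn; rewrite /natmin; case: excluded_middle_informative => [exP|[]].
  by case: constructive_indefinite_description => /= m [].
exact: ex_minn_prop Pn.
Qed.

Theorem lemma5p3 (X : {fset point}) :
  is_permutation X -> (GB X <= 2 * opt X)%N.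
Proof.
move=> HX; apply: natmax_le => _ [B [T [gT <-]]].
have [Y [satXY <-]] : exists Y, satisfied (X `|` Y) /\ #|` Y| = opt X.
  apply: (natmin_spec (P := fun k => exists Y, satisfied (X `|` Y) /\ #|` Y| = k)).
  exists (grid X); split => //.
  by rewrite (fsetUidPr _ _ (grid_subset X)); apply: satisfied_grid.
exact: guillotine_cost_bound HX gT satXY.
Qed.
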